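(* Let $p$ be a binary word of length $l$ with $r\le 3$ runs. For every $n\ge l$ there exists a $p$-optimal binary word of length $n$ having exactly $r$ runs.
   Context: $c_p(w)$ is the number of occurrences of $p$ as a (not necessarily consecutive) subsequence of $w$. $M_{n,p}=\max\{c_p(w): w\in\{0,1\}^n\}$; a binary word $w$ of length $n$ is $p$-optimal if $c_p(w)=M_{n,p}$. A run is a maximal block of consecutive equal letters. *)

From mathcomp Require Import all_boot.
Set Implicit Arguments. Unset Strict Implicit. Unset Printing Implicit Defensive.

(* Binary words are bitseq = seq bool (false = 0, true = 1). *)

(* c_p(w): number of occurrences of p as a (not necessarily consecutive)
   subsequence of w, i.e. the number of index selections (bit masks of
   length |w|) picking out p. *)
Definition occ (p w : bitseq) : nat :=
  #|[set m : (size w).-tuple bool | mask m w == p]|.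

Definition runs (w : bitseq) : nat :=
  match w with
  | [::] => 0
  | x :: s => (count id (pairmap (fun a b => a != b) x s)).+1
  end.

Definition optimal (p w : bitseq) : Prop :=
  forall w' : bitseq, size w' = size w -> occ p w' <= occ p w.

From mathcomp Require Import all_boot zify.
Set Implicit Arguments. Unset Strict Implicit. Unset Printing Implicit Defensive.

(* A binary pattern with at most three runs has the shape a^i b^j a^k with
   b = ~~ a (written [block3 a i j k]).  The proof rests on two estimates
   for the number of occurrences of p in a word w containing N letters a
   and m letters b:
   - always c_p(w) <= C(N, i + k) * C(m, j);
   - if j > 0 then c_p(w) <= C(m, j) * max_x C(x, i) * C(N - x, k).
   Conversely a block word a^x b^m a^z contains p at least
   C(x, i) * C(m, j) * C(z, k) times.  Starting from an arbitrary p-optimal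
   word w of length n (one exists since there are finitely many words) we
   therefore find a block word with the same letter counts and at least as
   many occurrences, hence optimal as well; positivity of the optimum forces
   all its blocks to be nonempty, so it has exactly runs p runs.  For a
   single run the word a^n is directly seen to be optimal. *)

Fixpoint occr (p w : bitseq) : nat :=
  match w with
  | [::] => p == [::]
  | x :: w' => occr p w' + (if p is y :: p' then (x == y) * occr p' w' else 0)
  end.

Lemma card_tuple_cons n (P : pred bitseq) :
  #|[set t : n.+1.-tuple bool | P t]| =
  #|[set t : n.-tuple bool | P (true :: t)]| +
  #|[set t : n.-tuple bool | P (false :: t)]|.
Proof.
rewrite -!sum1dep_card !big_mkcond /=.
pose cons_tuple (u : bool * n.-tuple bool) := [tuple of u.1 :: u.2].
rewrite (reindex cons_tuple) /=; last first.
  exists (fun t : n.+1.-tuple bool => (thead t, [tuple of behead t])).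
    by move=> [b t] _; rewrite /cons_tuple /= theadE; congr pair; apply: val_inj.
  by move=> t _; rewrite /cons_tuple /= [RHS]tuple_eta.
rewrite -(pair_bigA _ (fun b t => if P (b :: tval t) then 1 else 0)).
by rewrite big_bool -!big_mkcond.
Qed.

Lemma occE p w : occ p w = occr p w.
Proof.
elim: w p => [|x w IH] p.
  rewrite /occ -sum1dep_card big_mkcond /=.
  rewrite (eq_bigr (fun _ => nat_of_bool (p == [::]))); last first.
    by move=> t _; rewrite (tuple0 t) /= eq_sym; case: (p == [::]).
  by rewrite sum_nat_const -[#|_|]/#|{:0.-tuple bool}| card_tuple mul1n.
rewrite /occ /= (card_tuple_cons (size w) (fun s => mask s (x :: w) == p)) /= addnC.
congr addn; first exact: IH.
case: p => [|y p].
  by apply/eqP; rewrite cards_eq0; apply/eqP/setP => t; rewrite !inE.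
rewrite -IH /occ; case: (x =P y) => [->|nxy] /=.
  by rewrite mul1n; apply: eq_card => t; rewrite !inE eqseq_cons eqxx.
rewrite mul0n; apply/eqP; rewrite cards_eq0; apply/eqP/setP => t.
by rewrite !inE eqseq_cons; case: (x =P y).
Qed.

Lemma occr_nil w : occr [::] w = 1.
Proof. by elim: w => //= x w ->. Qed.

Lemma occr_prefix p s : 0 < occr p (p ++ s).
Proof.
elim: p => [|x p IH] /=; first by rewrite occr_nil.
by rewrite eqxx mul1n ltn_addl.
Qed.

(* An occurrence of p picks count_mem a p of the a's of w and
   count_mem (~~ a) p of its other letters. *)
Lemma occr_count_bound a p w :
  occr p w <= 'C(count_mem a w, count_mem a p) *
              'C(count_mem (~~ a) w, count_mem (~~ a) p).
Proof.
elim: w p => [|x w IH] [|y p] //=.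
  by rewrite addn0; have := IH [::]; rewrite /= !bin0.
have h1 := IH (y :: p); have h2 := IH p; clear IH.
case: a h1 h2; case: x; case: y => /= h1 h2;
  rewrite ?add1n ?add0n ?mul1n ?mul0n ?addn0 in h1 h2 *;
  try (rewrite binS mulnDl; exact: leq_add);
  try (rewrite binS mulnDr; exact: leq_add);
  apply: (leq_trans h1); apply: leq_mul => //; exact: leq_bin2l.
Qed.

Lemma count_mem_add_negb (a : bool) s : count_mem a s + count_mem (~~ a) s = size s.
Proof. by elim: s => //= x s <-; case: a; case: x => /=; lia. Qed.

Lemma count_nseq_same (a : bool) g : count_mem a (nseq g a) = g.
Proof. by rewrite count_nseq /= eqxx mul1n. Qed.

Lemma count_nseq_negb (a : bool) g : count_mem (~~ a) (nseq g a) = 0.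
Proof. by case: a; rewrite count_nseq. Qed.

Lemma count_negb_nseq (a : bool) g : count_mem a (nseq g (~~ a)) = 0.
Proof. by case: a; rewrite count_nseq. Qed.

(* The words a^i (~~a)^j a^k: all patterns with at most three runs, and
   the shape of the optimal words we construct. *)
Definition block3 (a : bool) (i j k : nat) : bitseq :=
  nseq i a ++ nseq j (~~ a) ++ nseq k a.

Lemma size_block3 a i j k : size (block3 a i j k) = i + j + k.
Proof. by rewrite /block3 !size_cat !size_nseq addnA. Qed.

Lemma count_block3 a i j k : count_mem a (block3 a i j k) = i + k.
Proof. by rewrite /block3 !count_cat count_nseq_same count_negb_nseq count_nseq_same. Qed.

Lemma count_block3_negb a i j k : count_mem (~~ a) (block3 a i j k) = j.
Proof. by rewrite /block3 !count_cat !count_nseq_negb count_nseq_same addn0. Qed.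

(* Choosing i of the first x letters a to start an occurrence. *)
Lemma occr_nseq_cat a i q x v :
  'C(x, i) * occr q v <= occr (nseq i a ++ q) (nseq x a ++ v).
Proof.
elim: x i => [|x IH] [|i] //=.
- by rewrite mul1n.
- rewrite mul1n; apply: leq_trans (leq_addr _ _).
  by have := IH 0; rewrite bin0 mul1n.
- rewrite eqxx mul1n binS mulnDl.
  by apply: leq_add; [exact: (IH i.+1) | exact: IH].
Qed.

(* Occurrences of a block pattern in a block word: choose the letters of
   each block of p inside the corresponding block of w. *)
Lemma occr_block3_ge a i j k x y z :
  'C(x, i) * 'C(y, j) * 'C(z, k) <= occr (block3 a i j k) (block3 a x y z).
Proof.
apply: leq_trans (occr_nseq_cat a i _ x _).
rewrite -mulnA leq_mul2l; apply/orP; right.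
apply: leq_trans (occr_nseq_cat (~~ a) j _ y _).
rewrite leq_mul2l; apply/orP; right.
by have := occr_nseq_cat a k [::] z [::]; rewrite !cats0 occr_nil muln1.
Qed.

Lemma split_leading_run (a : bool) w :
  exists g s, w = nseq g a ++ s /\ (s = [::] \/ exists t, s = ~~ a :: t).
Proof.
elim: w => [|y w [g [s [-> Hs]]]]; first by exists 0, [::]; auto.
case: (y =P a) => [->|nya]; first by exists g.+1, s.
exists 0, (y :: nseq g a ++ s); split => //; right; exists (nseq g a ++ s).
by congr cons; case: a y nya {Hs} => [] [].
Qed.

(* Removing the first ~~ a of a word a^g (~~a) w2 from a pattern
   a^i (~~a) q: occurrences either avoid it, or match it with the first
   ~~ a of the pattern, the i a's being taken among the first g letters. *)
Lemma occr_remove_first_negb a i q g w2 :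
  occr (nseq i a ++ ~~ a :: q) (nseq g a ++ ~~ a :: w2) =
  occr (nseq i a ++ ~~ a :: q) (nseq g a ++ w2) + 'C(g, i) * occr q w2.
Proof.
elim: g i => [|g IH] [|i] /=.
- by rewrite eqxx mul1n.
- by case: a; rewrite /= mul0n.
- move: (IH 0) => /= ->; clear IH.
  by case: a; rewrite /= ?mul0n ?addn0 bin0 mul1n.
- rewrite eqxx !mul1n; move: (IH i.+1) => /= ->; rewrite (IH i) binS mulnDl; lia.
Qed.

(* The largest number of ways to place a^i before and a^k after a cut of N
   letters a. *)
Definition split_max (i k N : nat) : nat :=
  \max_(x < N.+1) ('C(x, i) * 'C(N - x, k)).

Lemma split_max_ge i k x z : 'C(x, i) * 'C(z, k) <= split_max i k (x + z).
Proof.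
have lt : x < (x + z).+1 by rewrite ltnS leq_addr.
have := @leq_bigmax _ (fun y : 'I_(x + z).+1 => 'C(y, i) * 'C(x + z - y, k)) (Ordinal lt).
by rewrite /= addKn.
Qed.

Lemma split_max_attained i k N :
  exists2 x, x <= N & split_max i k N = 'C(x, i) * 'C(N - x, k).
Proof.
rewrite /split_max.
have [|x ->] := eq_bigmax (fun x : 'I_N.+1 => 'C(x, i) * 'C(N - x, k)).
  by rewrite card_ord.
by exists x; rewrite // -ltnS.
Qed.

(* The sharper estimate for three runs, by induction on the number m of
   letters ~~ a in w: deleting the first of them loses the occurrences which
   use it, and those number at most C(m, j-1) times a split of the a's. *)
Lemma occr_block3_bound a i j k w : 0 < j ->
  occr (block3 a i j k) w <=
  'C(count_mem (~~ a) w, j) * split_max i k (count_mem a w).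
Proof.
case: j => // j _.
move e: (count_mem (~~ a) w) => m.
elim: m w e => [|m IH] w e.
  apply: leq_trans (occr_count_bound a _ _) _.
  by rewrite e count_block3_negb bin0n muln0.
have [g [s [ew [es|[w2 es]]]]] := split_leading_run a w; rewrite {}ew {}es in e *.
  by move: e; rewrite cats0 count_nseq_negb.
rewrite /block3.
have [em2 ea2] : count_mem (~~ a) w2 = m /\
                 count_mem a (nseq g a ++ ~~ a :: w2) = g + count_mem a w2.
  split; first by move: e; rewrite count_cat count_nseq_negb /= eqxx => -[].
  by rewrite count_cat count_nseq_same; case: a {e IH}.
rewrite ea2 /= occr_remove_first_negb binS mulnDl; apply: leq_add.
  have := IH (nseq g a ++ w2).
  by rewrite !count_cat count_nseq_negb count_nseq_same em2; apply.
have bound_rest := occr_count_bound a (nseq j (~~ a) ++ nseq k a) w2.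
rewrite !count_cat count_negb_nseq !count_nseq_same count_nseq_negb em2 in bound_rest.
rewrite add0n addn0 in bound_rest.
apply: leq_trans (leq_mul (leqnn _) bound_rest) _.
by rewrite mulnA mulnC leq_mul2l split_max_ge orbT.
Qed.

Lemma runs_cons2 (x y : bool) s : runs (x :: y :: s) = (x != y) + runs (y :: s).
Proof. by rewrite /runs /= addnS. Qed.

Lemma runs_nseq (a : bool) i s : runs (nseq i.+1 a ++ s) = runs (a :: s).
Proof.
elim: i => [|i IH] //.
by rewrite -[nseq _.+2 _ ++ _]/(a :: nseq i.+1 a ++ s) runs_cons2 eqxx.
Qed.

Lemma runs_negb (a : bool) s : runs (a :: ~~ a :: s) = (runs (~~ a :: s)).+1.
Proof. by rewrite runs_cons2; case: a. Qed.

Lemma runs_negb' (a : bool) s : runs (~~ a :: a :: s) = (runs (a :: s)).+1.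
Proof. by rewrite runs_cons2; case: a. Qed.

Lemma runs_nseq1 (a : bool) x : runs (nseq x.+1 a) = 1.
Proof. by rewrite -[nseq _ _]cats0 runs_nseq. Qed.

Lemma runs_block3_1 a x : runs (block3 a x.+1 0 0) = 1.
Proof. by rewrite -[block3 _ _ _ _]/(nseq x.+1 a ++ [::]) cats0 runs_nseq1. Qed.

Lemma runs_block3_2 a x y : runs (block3 a x.+1 y.+1 0) = 2.
Proof.
rewrite -[block3 _ _ _ _]/(nseq x.+1 a ++ ~~ a :: (nseq y (~~ a) ++ [::])).
by rewrite cats0 runs_nseq runs_negb runs_nseq1.
Qed.

Lemma runs_block3_3 a x y z : runs (block3 a x.+1 y.+1 z.+1) = 3.
Proof.
rewrite -[block3 _ _ _ _]/(nseq x.+1 a ++ ~~ a :: (nseq y (~~ a) ++ nseq z.+1 a)).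
rewrite runs_nseq runs_negb -[~~ a :: _]/(nseq y.+1 (~~ a) ++ a :: nseq z a).
by rewrite runs_nseq runs_negb' runs_nseq1.
Qed.

Lemma classify_runs_le3 p : 0 < size p -> runs p <= 3 ->
  exists a i j k, [\/ p = block3 a i.+1 0 0, p = block3 a i.+1 j.+1 0
                    | p = block3 a i.+1 j.+1 k.+1].
Proof.
case: p => // y p _.
have [i [s [-> [->|[t ->]]]]] := split_leading_run y p.
  by exists y, i, 0, 0; apply: Or31; rewrite /block3 /= !cats0.
have [j [s2 [-> [->|[t2 ->]]]]] := split_leading_run (~~ y) t.
  by exists y, i, j, 0; apply: Or32; rewrite /block3 /= !cats0.
rewrite negbK; have [k [s3 [-> [->|[t3 ->]]]]] := split_leading_run y t2.
  by exists y, i, j, k; apply: Or33; rewrite /block3 /= !cats0.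
rewrite -[y :: _]/(nseq i.+1 y ++ ~~ y :: _) runs_nseq runs_negb.
rewrite -[~~ y :: _]/(nseq j.+1 (~~ y) ++ y :: _) runs_nseq runs_negb'.
rewrite -[y :: _]/(nseq k.+1 y ++ ~~ y :: _) runs_nseq runs_negb.
by rewrite /runs.
Qed.

Lemma exists_optimal p n : exists2 w, size w = n & optimal p w.
Proof.
have [t _ t_max] := @arg_maxnP _ [tuple of nseq n false] xpredT
                       (fun t : n.-tuple bool => occ p t) isT.
exists (tval t); first exact: size_tuple.
by move=> w; rewrite size_tuple => sw; apply: (t_max (Tuple (introT eqP sw))).
Qed.

Lemma optimal_ge p w v :
  optimal p w -> size v = size w -> occ p w <= occ p v -> optimal p v.
Proof.
by move=> opt_w sv le_wv w'; rewrite sv => /opt_w le_w'; apply: leq_trans le_wv.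
Qed.

Lemma optimal_occ_pos p w : size p <= size w -> optimal p w -> 0 < occ p w.
Proof.
move=> le_pw opt_w; apply: leq_trans (opt_w (p ++ nseq (size w - size p) false) _).
  by rewrite occE occr_prefix.
by rewrite size_cat size_nseq subnKC.
Qed.

Definition optimal_same_runs (p : bitseq) (n : nat) : Prop :=
  exists w, [/\ size w = n, optimal p w & runs w = runs p].

Lemma optimal_one_run a i n : i < n -> optimal_same_runs (block3 a i.+1 0 0) n.
Proof.
case: n => // n _; exists (block3 a n.+1 0 0); split.
- by rewrite size_block3 !addn0.
- move=> w'; rewrite size_block3 !addn0 => sw; rewrite !occE.
  apply: leq_trans (occr_count_bound a _ w') _.
  rewrite count_block3 count_block3_negb addn0 bin0 muln1.
  apply: leq_trans (occr_block3_ge a i.+1 0 0 n.+1 0 0); rewrite !bin0 !muln1.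
  by apply: leq_bin2l; rewrite -sw count_size.
- by rewrite !runs_block3_1.
Qed.

(* Two runs: an optimal word w may be replaced by a^N (~~a)^m, where N and m
   are its letter counts. *)
Lemma optimal_two_runs a i j n :
  i.+1 + j.+1 <= n -> optimal_same_runs (block3 a i.+1 j.+1 0) n.
Proof.
set p := block3 a i.+1 j.+1 0 => le_pn.
have [w sw opt_w] := exists_optimal p n.
set N := count_mem a w; set m := count_mem (~~ a) w.
have bound : occ p w <= 'C(N, i.+1) * 'C(m, j.+1).
  have := occr_count_bound a p w.
  by rewrite occE count_block3 count_block3_negb addn0.
have := leq_trans (optimal_occ_pos _ opt_w) bound.
rewrite size_block3 sw addn0 => /(_ le_pn).
rewrite muln_gt0 !bin_gt0 => /andP[lt_iN lt_jm].
exists (block3 a N m 0); split.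
- by rewrite size_block3 addn0 /N /m count_mem_add_negb.
- apply: optimal_ge opt_w _ _; first by rewrite size_block3 addn0 count_mem_add_negb.
  apply: leq_trans bound _; rewrite occE.
  by have := occr_block3_ge a i.+1 j.+1 0 N m 0; rewrite bin0 muln1.
- rewrite -(prednK (leq_ltn_trans (leq0n i) lt_iN)).
  by rewrite -(prednK (leq_ltn_trans (leq0n j) lt_jm)) !runs_block3_2.
Qed.

(* Three runs: an optimal word w may be replaced by a^x (~~a)^m a^(N-x),
   with x a best split of its N letters a. *)
Lemma optimal_three_runs a i j k n :
  i.+1 + j.+1 + k.+1 <= n -> optimal_same_runs (block3 a i.+1 j.+1 k.+1) n.
Proof.
set p := block3 a i.+1 j.+1 k.+1 => le_pn.
have [w sw opt_w] := exists_optimal p n.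
set N := count_mem a w; set m := count_mem (~~ a) w.
have [x le_xN best_x] := split_max_attained i.+1 k.+1 N.
have bound : occ p w <= 'C(m, j.+1) * ('C(x, i.+1) * 'C(N - x, k.+1)).
  by rewrite occE -best_x; apply: occr_block3_bound.
have := leq_trans (optimal_occ_pos _ opt_w) bound.
rewrite size_block3 sw => /(_ le_pn); rewrite !muln_gt0 !bin_gt0.
case/and3P => lt_jm lt_ix lt_kNx.
exists (block3 a x m (N - x)); split.
- by rewrite size_block3 addnAC subnKC // count_mem_add_negb.
- apply: optimal_ge opt_w _ _.
    by rewrite size_block3 addnAC subnKC // count_mem_add_negb.
  apply: leq_trans bound _; rewrite occE mulnCA mulnA.
  exact: occr_block3_ge.
- rewrite -(prednK (leq_ltn_trans (leq0n k) lt_kNx)).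
  rewrite -(prednK (leq_ltn_trans (leq0n j) lt_jm)).
  by rewrite -(prednK (leq_ltn_trans (leq0n i) lt_ix)) !runs_block3_3.
Qed.

Theorem mainTheorem8 (p : bitseq) (n : nat) :
  0 < size p -> runs p <= 3 -> size p <= n ->
  exists w : bitseq, [/\ size w = n, optimal p w & runs w = runs p].
Proof.
move=> p_gt0 p_runs le_pn.
have [a [i [j [k [] ep]]]] := classify_runs_le3 p_gt0 p_runs;
  rewrite ep size_block3 in le_pn *.
- by apply: optimal_one_run; rewrite !addn0 in le_pn.
- by apply: optimal_two_runs; rewrite addn0 in le_pn.
- exact: optimal_three_runs.
Qed.
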